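(* Consider the system $x_{t+1}^{(i)} = f_0(x_t^{(i)}) + B(x_t^{(i)})u_t^{(i)} - f(x_t^{(i)},c^{(i)}) + w_t^{(i)}$, $x_1^{(i)}=0$, for $i=1,\dots,N$, $t=1,\dots,T$, under the standing assumptions in the context (full actuation, $\|w_t^{(i)}\|\le W$, e-ISS of $f_0$ with constants $\beta,\gamma,\rho$). Suppose $f(x,c)=Y_1(x)\Theta+Y_2(x)c$ with known $Y_1:\mathbb{R}^n\to\mathbb{R}^{n\times p}$, $Y_2:\mathbb{R}^n\to\mathbb{R}^{n\times h}$, $\|Y_1(x)\|\le K_1$, $\|Y_2(x)\|\le K_2$ for all $x$, and unknown $\Theta\in\mathbb{R}^p$, $c^{(i)}\in\mathbb{R}^h$ with $\|\Theta\|\le K_\Theta$, $\|c^{(i)}\|\le K_c$ for all $i$. Let $\mathcal{K}_1=\{\hat\Theta:\|\hat\Theta\|\le K_\Theta\}$, $\mathcal{K}_2=\{\hat c:\|\hat c\|\le K_c\}$, and define $$C_1=4K_1^2K_\Theta+4K_1K_2K_c+2K_1W,\qquad C_2=4K_2^2K_c+4K_1K_2K_\Theta+2K_2W.$$ (a) OMAC with $\hat f_t^{(i)}=Y_1(x_t^{(i)})\hat\Theta^{(i)}+Y_2(x_t^{(i)})\hat c_t^{(i)}$, using projected online gradient descent for both adapters with learning rates $\bar\eta^{(i)}=\frac{2K_\Theta}{C_1T\sqrt{i}}$ (outer) and $\eta_t^{(i)}=\frac{2K_c}{C_2\sqrt t}$ (inner), satisfies $$\mathsf{ACE}(\mathrm{OMAC})\le\frac{\gamma}{1-\rho}\sqrt{W^2+3\Big(K_\Theta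 C_1\frac{1}{\sqrt N}+K_cC_2\frac{1}{\sqrt T}\Big)}.$$ (b) The baseline adaptive controller, which adapts $\hat\alpha=[\hat\Theta;\hat c]$ jointly at every time step by projected online gradient descent, satisfies $$\mathsf{ACE}(\mathrm{baseline})\le\frac{\gamma}{1-\rho}\sqrt{W^2+3\sqrt{K_\Theta^2+K_c^2}\sqrt{C_1^2+C_2^2}\frac{1}{\sqrt T}}.$$
   Context: Standing assumptions: $x_t^{(i)}\in\mathbb{R}^n$, $u_t^{(i)}\in\mathbb{R}^m$; $f_0:\mathbb{R}^n\to\mathbb{R}^n$ and $B:\mathbb{R}^n\to\mathbb{R}^{n\times m}$ known with $\mathrm{rank}(B(x))=n$ for all $x$; disturbances $w_t^{(i)}$ (possibly adversarial) with $\|w_t^{(i)}\|\le W$; $c^{(i)}$ may be chosen adversarially. $f_0$ is e-ISS: there exist $\beta,\gamma\ge0$, $0\le\rho<1$ such that for every $t$ and $v_1,\dots,v_{t-1}\in\mathbb{R}^n$ the iterates $x_{k+1}=f_0(x_k)+v_k$ satisfy $\|x_t\|\le\beta\rho^{t-1}\|x_1\|+\gamma\sum_{k=1}^{t-1}\rho^{t-1-k}\|v_k\|$. $\|\cdot\|$ is the Euclidean norm for vectors and spectral norm for matrices. $\mathsf{ACE}=\frac1{TN}\sum_{i=1}^N\sum_{t=1}^T\|x_t^{(i)}\|$. Both controllers are certainty-equivalence: at step $(i,t)$ they compute an estimate $\hat f_t^{(i)}$ and apply $u_t^{(i)}=B(x_t^{(i)})^{\dagger}\hat f_t^{(i)}$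 (pseudo-inverse); then they observe $y_t^{(i)}=f_0(x_t^{(i)})+B(x_t^{(i)})u_t^{(i)}-x_{t+1}^{(i)}=f(x_t^{(i)},c^{(i)})-w_t^{(i)}$. Loss: $\ell_t^{(i)}(\hat\Theta,\hat c)=\|Y_1(x_t^{(i)})\hat\Theta+Y_2(x_t^{(i)})\hat c-y_t^{(i)}\|^2$. Projected OGD on a convex set $\mathcal{K}$ with step sizes $\eta_t$: start at a point of $\mathcal{K}$, update $z_{t+1}=\Pi_{\mathcal{K}}(z_t-\eta_t\nabla_t)$ where $\Pi_{\mathcal{K}}$ is Euclidean projection and $\nabla_t$ the gradient of the current cost at $z_t$. OMAC in (a): $\hat\Theta^{(1)}\in\mathcal{K}_1$; in each environment $i$, $\hat c_1^{(i)}\in\mathcal{K}_2$ and $\hat c_{t+1}^{(i)}=\Pi_{\mathcal{K}_2}(\hat c_t^{(i)}-\eta_t^{(i)}\nabla_{\hat c}\ell_t^{(i)}(\hat\Theta^{(i)},\hat c_t^{(i)}))$; after environment $i$, $\hat\Theta^{(i+1)}=\Pi_{\mathcal{K}_1}(\hat\Theta^{(i)}-\bar\eta^{(i)}\sum_{t=1}^T\nabla_{\hat\Theta}\ell_t^{(i)}(\hat\Theta^{(i)},\hat c_t^{(i)}))$. The $c^{(i)}$ are never observed. Baseline in (b): $\hat f_t^{(i)}=Y_1(x_t^{(i)})\hat\Theta_t^{(i)}+Y_2(x_t^{(i)})\hat c_t^{(i)}$, where in each environment $\hat\alpha_t^{(i)}=[\hat\Theta_t^{(i)};\hat c_t^{(i)}]$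 starts in $\bar{\mathcal{K}}=\{[\hat\Theta;\hat c]:\|\hat\Theta\|\le K_\Theta,\|\hat c\|\le K_c\}$ and is updated every step by projected OGD on $\bar{\mathcal K}$ for the loss $\ell_t^{(i)}$ viewed as a function of $\hat\alpha$, with step sizes $\frac{2\sqrt{K_\Theta^2+K_c^2}}{\sqrt{C_1^2+C_2^2}\sqrt t}$. *)

From HB Require Import structures.
From mathcomp Require Import all_boot all_order all_algebra.
From mathcomp Require Import boolp classical_sets reals.
Set Implicit Arguments. Unset Strict Implicit. Unset Printing Implicit Defensive.
Import Order.TTheory GRing.Theory Num.Theory.
Local Open Scope ring_scope.
Local Open Scope classical_set_scope.

Definition vnorm {R : realType} {k : nat} (v : 'cV[R]_k) : R :=
  Num.sqrt (\sum_(j < k) v j ord0 ^+ 2).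

Definition spec_norm {R : realType} {a b : nat} (A : 'M[R]_(a, b)) : R :=
  sup [set r | exists v : 'cV[R]_b, vnorm v <= 1 /\ r = vnorm (A *m v)].

Definition ball_set {R : realType} {k : nat} (K : R) : set 'cV[R]_k :=
  [set v | vnorm v <= K].

Definition is_proj {R : realType} {k : nat} (S : set 'cV[R]_k) (z q : 'cV[R]_k) :=
  S q /\ forall q', S q' -> vnorm (z - q) <= vnorm (z - q').

(* The Euclidean projection onto S (well defined for nonempty closed convex S). *)
Definition proj {R : realType} {k : nat} (S : set 'cV[R]_k) (z : 'cV[R]_k) : 'cV[R]_k :=
  xget z (is_proj S z).

Definition is_pinv {R : realType} {a b : nat} (A : 'M[R]_(a, b)) (X : 'M[R]_(b, a)) :=
  [/\ A *m X *m A = A, X *m A *m X = X, (A *m X)^T = A *m X & (X *m A)^T = X *m A].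

(* Moore-Penrose pseudo-inverse (exists and is unique). *)
Definition pinv {R : realType} {a b : nat} (A : 'M[R]_(a, b)) : 'M[R]_(b, a) :=
  xget 0 (is_pinv A).

Definition eISS {R : realType} {n : nat} (f0 : 'cV[R]_n -> 'cV[R]_n)
    (beta gamma rho : R) : Prop :=
  forall (x v : nat -> 'cV[R]_n) (t : nat), (1 <= t)%N ->
    (forall k, (1 <= k < t)%N -> x k.+1 = f0 (x k) + v k) ->
    vnorm (x t) <= beta * rho ^+ (t - 1) * vnorm (x 1%N)
                   + gamma * \sum_(1 <= k < t) rho ^+ (t - 1 - k) * vnorm (v k).

(* loss l(Th, c) = || Y1 Th + Y2 c - y ||^2 ; gradients written explicitly. *)
Definition resid {R : realType} {n p h : nat} (Y1x : 'M[R]_(n, p)) (Y2x : 'M[R]_(n, h))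
    (Th : 'cV[R]_p) (ch : 'cV[R]_h) (y : 'cV[R]_n) : 'cV[R]_n :=
  Y1x *m Th + Y2x *m ch - y.

Definition grad_Th {R : realType} {n p h : nat} (Y1x : 'M[R]_(n, p)) (Y2x : 'M[R]_(n, h))
    (Th : 'cV[R]_p) (ch : 'cV[R]_h) (y : 'cV[R]_n) : 'cV[R]_p :=
  2 *: ((Y1x)^T *m resid Y1x Y2x Th ch y).

Definition grad_c {R : realType} {n p h : nat} (Y1x : 'M[R]_(n, p)) (Y2x : 'M[R]_(n, h))
    (Th : 'cV[R]_p) (ch : 'cV[R]_h) (y : 'cV[R]_n) : 'cV[R]_h :=
  2 *: ((Y2x)^T *m resid Y1x Y2x Th ch y).

Definition cl_next {R : realType} {n m p h : nat}
    (f0 : 'cV[R]_n -> 'cV[R]_n) (B : 'cV[R]_n -> 'M[R]_(n, m))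
    (Y1 : 'cV[R]_n -> 'M[R]_(n, p)) (Y2 : 'cV[R]_n -> 'M[R]_(n, h))
    (Theta : 'cV[R]_p) (ci : 'cV[R]_h) (wt : 'cV[R]_n) (x fhat : 'cV[R]_n) : 'cV[R]_n :=
  f0 x + B x *m (pinv (B x) *m fhat) - (Y1 x *m Theta + Y2 x *m ci) + wt.

Definition cl_obs {R : realType} {n m : nat}
    (f0 : 'cV[R]_n -> 'cV[R]_n) (B : 'cV[R]_n -> 'M[R]_(n, m))
    (x fhat xnext : 'cV[R]_n) : 'cV[R]_n :=
  f0 x + B x *m (pinv (B x) *m fhat) - xnext.

(* OMAC inner loop in environment i with fixed outer estimate Thhat.
   omac_env ... k = (x_{k+1}, c^_{k+1}) ; x_1 = 0, c^_1 = ch1. *)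
Fixpoint omac_env {R : realType} {n m p h : nat}
    (f0 : 'cV[R]_n -> 'cV[R]_n) (B : 'cV[R]_n -> 'M[R]_(n, m))
    (Y1 : 'cV[R]_n -> 'M[R]_(n, p)) (Y2 : 'cV[R]_n -> 'M[R]_(n, h))
    (Theta : 'cV[R]_p) (ci : 'cV[R]_h) (wi : nat -> 'cV[R]_n)
    (eta : nat -> R) (Kc : R) (Thhat : 'cV[R]_p) (ch1 : 'cV[R]_h) (k : nat)
    : 'cV[R]_n * 'cV[R]_h :=
  match k with
  | 0%N => (0, ch1)
  | k'.+1 =>
      let st := omac_env f0 B Y1 Y2 Theta ci wi eta Kc Thhat ch1 k' in
      let x := st.1 in let ch := st.2 in
      let t := k'.+1 in
      let fhat := Y1 x *m Thhat + Y2 x *m ch in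
      let x' := cl_next f0 B Y1 Y2 Theta ci (wi t) x fhat in
      let y := cl_obs f0 B x fhat x' in
      (x', proj (ball_set Kc) (ch - eta t *: grad_c (Y1 x) (Y2 x) Thhat ch y))
  end.

(* OMAC outer loop: omac_theta ... j = Th^(j+1), with Th^(1) = Th1. *)
Fixpoint omac_theta {R : realType} {n m p h : nat}
    (f0 : 'cV[R]_n -> 'cV[R]_n) (B : 'cV[R]_n -> 'M[R]_(n, m))
    (Y1 : 'cV[R]_n -> 'M[R]_(n, p)) (Y2 : 'cV[R]_n -> 'M[R]_(n, h))
    (Theta : 'cV[R]_p) (c : nat -> 'cV[R]_h) (w : nat -> nat -> 'cV[R]_n)
    (eta : nat -> R) (etabar : nat -> R) (KTh Kc : R)
    (Th1 : 'cV[R]_p) (ch1 : nat -> 'cV[R]_h) (T : nat) (j : nat) : 'cV[R]_p :=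
  match j with
  | 0%N => Th1
  | j'.+1 =>
      let i := j'.+1 in
      let Th := omac_theta f0 B Y1 Y2 Theta c w eta etabar KTh Kc Th1 ch1 T j' in
      let st := omac_env f0 B Y1 Y2 Theta (c i) (w i) eta Kc Th (ch1 i) in
      let g := \sum_(1 <= t < T.+1)
          (let x := (st t.-1).1 in let ch := (st t.-1).2 in
           let fhat := Y1 x *m Th + Y2 x *m ch in
           let y := cl_obs f0 B x fhat (st t).1 in
           grad_Th (Y1 x) (Y2 x) Th ch y) in
      proj (ball_set KTh) (Th - etabar i *: g)
  end.

Definition omac_x {R : realType} {n m p h : nat}
    (f0 : 'cV[R]_n -> 'cV[R]_n) (B : 'cV[R]_n -> 'M[R]_(n, m))
    (Y1 : 'cV[R]_n -> 'M[R]_(n, p)) (Y2 : 'cV[R]_n -> 'M[R]_(n, h))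
    (Theta : 'cV[R]_p) (c : nat -> 'cV[R]_h) (w : nat -> nat -> 'cV[R]_n)
    (eta : nat -> R) (etabar : nat -> R) (KTh Kc : R)
    (Th1 : 'cV[R]_p) (ch1 : nat -> 'cV[R]_h) (T : nat) (i t : nat) : 'cV[R]_n :=
  (omac_env f0 B Y1 Y2 Theta (c i) (w i) eta Kc
     (omac_theta f0 B Y1 Y2 Theta c w eta etabar KTh Kc Th1 ch1 T i.-1)
     (ch1 i) t.-1).1.

(* Baseline: joint estimate alpha = [Th; c] in 'cV_(p + h). *)
Definition Kbar_set {R : realType} {p h : nat} (KTh Kc : R) : set 'cV[R]_(p + h) :=
  [set a | vnorm (usubmx a) <= KTh /\ vnorm (dsubmx a) <= Kc].

(* base_env ... k = (x_{k+1}, alpha_{k+1}) in environment i. *)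
Fixpoint base_env {R : realType} {n m p h : nat}
    (f0 : 'cV[R]_n -> 'cV[R]_n) (B : 'cV[R]_n -> 'M[R]_(n, m))
    (Y1 : 'cV[R]_n -> 'M[R]_(n, p)) (Y2 : 'cV[R]_n -> 'M[R]_(n, h))
    (Theta : 'cV[R]_p) (ci : 'cV[R]_h) (wi : nat -> 'cV[R]_n)
    (eta : nat -> R) (KTh Kc : R) (a1 : 'cV[R]_(p + h)) (k : nat)
    : 'cV[R]_n * 'cV[R]_(p + h) :=
  match k with
  | 0%N => (0, a1)
  | k'.+1 =>
      let st := base_env f0 B Y1 Y2 Theta ci wi eta KTh Kc a1 k' in
      let x := st.1 in let a := st.2 in
      let Th := usubmx a in let ch := dsubmx a in
      let t := k'.+1 in
      let fhat := Y1 x *m Th + Y2 x *m ch in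
      let x' := cl_next f0 B Y1 Y2 Theta ci (wi t) x fhat in
      let y := cl_obs f0 B x fhat x' in
      let g := col_mx (grad_Th (Y1 x) (Y2 x) Th ch y) (grad_c (Y1 x) (Y2 x) Th ch y) in
      (x', proj (Kbar_set KTh Kc) (a - eta t *: g))
  end.

Definition base_x {R : realType} {n m p h : nat}
    (f0 : 'cV[R]_n -> 'cV[R]_n) (B : 'cV[R]_n -> 'M[R]_(n, m))
    (Y1 : 'cV[R]_n -> 'M[R]_(n, p)) (Y2 : 'cV[R]_n -> 'M[R]_(n, h))
    (Theta : 'cV[R]_p) (c : nat -> 'cV[R]_h) (w : nat -> nat -> 'cV[R]_n)
    (eta : nat -> R) (KTh Kc : R) (a1 : nat -> 'cV[R]_(p + h)) (i t : nat) : 'cV[R]_n :=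
  (base_env f0 B Y1 Y2 Theta (c i) (w i) eta KTh Kc (a1 i) t.-1).1.

Definition ACE {R : realType} {n : nat} (N T : nat) (x : nat -> nat -> 'cV[R]_n) : R :=
  (T * N)%:R^-1 * \sum_(1 <= i < N.+1) \sum_(1 <= t < T.+1) vnorm (x i t).

From HB Require Import structures.
From mathcomp Require Import all_boot all_order all_algebra.
From mathcomp Require Import boolp classical_sets reals.
From mathcomp Require Import ring lra zify.
Set Implicit Arguments. Unset Strict Implicit. Unset Printing Implicit Defensive.
Import Order.TTheory GRing.Theory Num.Theory.
Local Open Scope ring_scope.
Local Open Scope classical_set_scope.

(* Under full actuation the certainty-equivalence input cancels the estimate,
   so each environment evolves as [x_{t+1} = f0 x_t + e_t] with [e_t] the
   residual of the current estimate; e-ISS and Cauchy-Schwarz bound the ACE by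
   [gamma / (1 - rho)] times the root mean square of the [e_t].  The loss is a
   convex quadratic equal to [|w_t|^2] at the true parameters, hence
   [|e_t|^2 <= W^2 + <gradient, estimate - truth>], and the sum of the last
   terms is the regret of projected online gradient descent, at most
   [3/2 D G sqrt n] after [n] steps on a set of diameter [D] with gradients
   bounded by [G].  OMAC pays this for the inner adapter in every environment
   ([D = 2 Kc], [G = C2]) and once for the outer adapter across the [N]
   environments ([D = 2 KTh], [G = C1 T]); the baseline pays it in every
   environment for the joint estimate. *)

Section InnerProduct.
Variable R : realType.

Definition dot k (u v : 'cV[R]_k) : R := (u^T *m v) 0 0.

Lemma dotE k (u v : 'cV[R]_k) : dot u v = \sum_j u j 0 * v j 0.
Proof. by rewrite /dot mxE; apply: eq_bigr => j _; rewrite mxE. Qed.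

Lemma dotC k (u v : 'cV[R]_k) : dot u v = dot v u.
Proof. by rewrite !dotE; apply: eq_bigr => j _; rewrite mulrC. Qed.

Lemma dotDl k (u v z : 'cV[R]_k) : dot (u + v) z = dot u z + dot v z.
Proof. by rewrite /dot linearD mulmxDl mxE. Qed.

Lemma dotDr k (u v z : 'cV[R]_k) : dot z (u + v) = dot z u + dot z v.
Proof. by rewrite /dot mulmxDr mxE. Qed.

Lemma dotZl k a (u z : 'cV[R]_k) : dot (a *: u) z = a * dot u z.
Proof. by rewrite /dot linearZ /= -scalemxAl mxE. Qed.

Lemma dotZr k a (u z : 'cV[R]_k) : dot z (a *: u) = a * dot z u.
Proof. by rewrite /dot -scalemxAr mxE. Qed.

Lemma dotNl k (u z : 'cV[R]_k) : dot (- u) z = - dot u z.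
Proof. by rewrite -scaleN1r dotZl mulN1r. Qed.

Lemma dotNr k (u z : 'cV[R]_k) : dot z (- u) = - dot z u.
Proof. by rewrite -scaleN1r dotZr mulN1r. Qed.

Lemma dotBl k (u v z : 'cV[R]_k) : dot (u - v) z = dot u z - dot v z.
Proof. by rewrite dotDl dotNl. Qed.

Lemma dotBr k (u v z : 'cV[R]_k) : dot z (u - v) = dot z u - dot z v.
Proof. by rewrite dotDr dotNr. Qed.

Lemma dot0l k (z : 'cV[R]_k) : dot 0 z = 0.
Proof. by rewrite /dot linear0 mul0mx mxE. Qed.

Lemma dot_suml (I : Type) (r : seq I) (P : pred I) k (F : I -> 'cV[R]_k) v :
  dot (\sum_(i <- r | P i) F i) v = \sum_(i <- r | P i) dot (F i) v.
Proof. exact: (big_morph (fun u => dot u v) (fun x y => dotDl x y v) (dot0l v)). Qed.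

Lemma dot_mulmxl a b (A : 'M[R]_(a, b)) (u : 'cV[R]_b) (v : 'cV[R]_a) :
  dot (A *m u) v = dot u (A^T *m v).
Proof. by rewrite /dot trmx_mul mulmxA. Qed.

Lemma dot_col_mx a b (u1 v1 : 'cV[R]_a) (u2 v2 : 'cV[R]_b) :
  dot (col_mx u1 u2) (col_mx v1 v2) = dot u1 v1 + dot u2 v2.
Proof.
by rewrite !dotE big_split_ord; congr (_ + _); apply: eq_bigr => j _;
  rewrite ?col_mxEu ?col_mxEd.
Qed.

Lemma dot_submx a b (u v : 'cV[R]_(a + b)) :
  dot u v = dot (usubmx u) (usubmx v) + dot (dsubmx u) (dsubmx v).
Proof. by rewrite -{1}(vsubmxK u) -{1}(vsubmxK v) dot_col_mx. Qed.

Lemma dot_ge0 k (u : 'cV[R]_k) : 0 <= dot u u.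
Proof. by rewrite dotE; apply: sumr_ge0 => j _; rewrite -expr2 sqr_ge0. Qed.

Lemma dot_eq0 k (u : 'cV[R]_k) : dot u u = 0 -> u = 0.
Proof.
rewrite dotE => /eqP; rewrite psumr_eq0 => [/allP u0|j _]; last first.
  by rewrite -expr2 sqr_ge0.
apply/matrixP => i j; rewrite (ord1 j) mxE.
by have := u0 i (mem_index_enum _); rewrite mulf_eq0 orbb => /eqP.
Qed.

Lemma vnormE k (u : 'cV[R]_k) : vnorm u = Num.sqrt (dot u u).
Proof. by rewrite /vnorm dotE; congr Num.sqrt; apply: eq_bigr => j _; rewrite expr2. Qed.

Lemma vnorm_ge0 k (u : 'cV[R]_k) : 0 <= vnorm u.
Proof. by rewrite vnormE sqrtr_ge0. Qed.

Lemma sqr_vnorm k (u : 'cV[R]_k) : vnorm u ^+ 2 = dot u u.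
Proof. by rewrite vnormE sqr_sqrtr // dot_ge0. Qed.

Lemma vnorm0 k : vnorm (0 : 'cV[R]_k) = 0.
Proof. by rewrite vnormE dot0l sqrtr0. Qed.

Lemma vnorm_eq0 k (u : 'cV[R]_k) : vnorm u = 0 -> u = 0.
Proof. by move=> u0; apply: dot_eq0; rewrite -sqr_vnorm u0 expr0n. Qed.

Lemma vnorm_le0 k (u : 'cV[R]_k) : vnorm u <= 0 -> u = 0.
Proof. by move=> u0; apply: vnorm_eq0; apply/le_anti; rewrite u0 vnorm_ge0. Qed.

Lemma vnorm_le_dot k (u : 'cV[R]_k) a : 0 <= a -> dot u u <= a ^+ 2 -> vnorm u <= a.
Proof. by move=> a0 ua; rewrite vnormE -(ger0_norm a0) -sqrtr_sqr ler_wsqrtr. Qed.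

Lemma dot_le_vnorm k (u v : 'cV[R]_k) : vnorm u <= vnorm v -> dot u u <= dot v v.
Proof. by move=> uv; rewrite -!sqr_vnorm; have := vnorm_ge0 u; nra. Qed.

Lemma vnormZ k a (u : 'cV[R]_k) : vnorm (a *: u) = `|a| * vnorm u.
Proof. by rewrite !vnormE dotZl dotZr mulrA -expr2 sqrtrM ?sqr_ge0 // sqrtr_sqr. Qed.

Lemma vnormN k (u : 'cV[R]_k) : vnorm (- u) = vnorm u.
Proof. by rewrite -scaleN1r vnormZ normrN normr1 mul1r. Qed.

(* Expand [0 <= |a u - b v|^2] with [a = |v|] and [b = |u|]. *)
Lemma dot_le_mul_vnorm k (u v : 'cV[R]_k) : dot u v <= vnorm u * vnorm v.
Proof.
set a := vnorm v; set b := vnorm u.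
have a0 : 0 <= a by exact: vnorm_ge0.
have b0 : 0 <= b by exact: vnorm_ge0.
have := dot_ge0 (a *: u - b *: v).
rewrite dotBl !dotBr !dotZl !dotZr (dotC v u) -!sqr_vnorm -/a -/b => sq_ge0.
have [az|an0] := eqVneq a 0; first by rewrite az mulr0 (vnorm_eq0 az) dotC dot0l.
have [bz|bn0] := eqVneq b 0; first by rewrite bz mul0r (vnorm_eq0 bz) dot0l.
have ab : 0 < a * b by rewrite mulr_gt0 // lt0r ?an0 ?bn0.
have : a * b * dot u v <= a * b * (b * a) by nra.
by rewrite ler_pM2l // mulrC.
Qed.

Lemma ler_vnormD k (u v : 'cV[R]_k) : vnorm (u + v) <= vnorm u + vnorm v.
Proof.
apply: vnorm_le_dot; first by rewrite addr_ge0 ?vnorm_ge0.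
rewrite dotDl !dotDr (dotC v u) -(sqr_vnorm u) -(sqr_vnorm v).
have := dot_le_mul_vnorm u v; have := vnorm_ge0 u; have := vnorm_ge0 v; nra.
Qed.

Lemma ler_vnormB k (u v : 'cV[R]_k) : vnorm (u - v) <= vnorm u + vnorm v.
Proof. by rewrite -(vnormN v) ler_vnormD. Qed.

Lemma ler_vnorm_sum (I : Type) (r : seq I) (P : pred I) k (F : I -> 'cV[R]_k) :
  vnorm (\sum_(i <- r | P i) F i) <= \sum_(i <- r | P i) vnorm (F i).
Proof.
elim/big_ind2: _ => [|u a v b ua vb|//]; first by rewrite vnorm0.
exact: le_trans (ler_vnormD _ _) (lerD ua vb).
Qed.

Lemma sqr_vnorm_col_mx a b (u : 'cV[R]_a) (v : 'cV[R]_b) :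
  vnorm (col_mx u v) ^+ 2 = vnorm u ^+ 2 + vnorm v ^+ 2.
Proof. by rewrite !sqr_vnorm dot_col_mx. Qed.

End InnerProduct.

Section SpectralNorm.
Variable R : realType.

Definition spec_set a b (A : 'M[R]_(a, b)) :=
  [set r | exists v : 'cV[R]_b, vnorm v <= 1 /\ r = vnorm (A *m v)].

Lemma vnorm_mulmx_le_frobenius a b (A : 'M[R]_(a, b)) v :
  vnorm (A *m v) <= Num.sqrt (\sum_i \sum_j A i j ^+ 2) * vnorm v.
Proof.
have F0 : 0 <= \sum_i \sum_j A i j ^+ 2.
  by apply: sumr_ge0 => i _; apply: sumr_ge0 => j _; exact: sqr_ge0.
apply: vnorm_le_dot; first by rewrite mulr_ge0 ?sqrtr_ge0 ?vnorm_ge0.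
rewrite exprMn sqr_sqrtr // sqr_vnorm dotE mulr_suml; apply: ler_sum => i _.
have -> : (A *m v) i 0 = dot (row i A)^T v.
  by rewrite mxE dotE; apply: eq_bigr => j _; rewrite !mxE.
have -> : \sum_j A i j ^+ 2 = dot (row i A)^T (row i A)^T.
  by rewrite dotE; apply: eq_bigr => j _; rewrite !mxE expr2.
have := dot_le_mul_vnorm (row i A)^T v.
have := dot_le_mul_vnorm (- (row i A)^T) v; rewrite dotNl vnormN.
rewrite -expr2 -!sqr_vnorm; have := vnorm_ge0 (row i A)^T; have := vnorm_ge0 v.
nra.
Qed.

Lemma has_sup_spec_set a b (A : 'M[R]_(a, b)) : has_sup (spec_set A).
Proof.
split; first by exists 0, 0; rewrite vnorm0 mulmx0 vnorm0 ler01.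
exists (Num.sqrt (\sum_i \sum_j A i j ^+ 2)) => _ [v [v1 ->]].
apply: le_trans (vnorm_mulmx_le_frobenius A v) _.
by rewrite ler_piMr ?sqrtr_ge0.
Qed.

Lemma spec_norm_ge0 a b (A : 'M[R]_(a, b)) : 0 <= spec_norm A.
Proof.
apply: (sup_upper_bound (has_sup_spec_set A)).
by exists 0; rewrite vnorm0 mulmx0 vnorm0 ler01.
Qed.

Lemma vnorm_mulmx_le a b (A : 'M[R]_(a, b)) v : vnorm (A *m v) <= spec_norm A * vnorm v.
Proof.
have [v0|vn0] := eqVneq (vnorm v) 0.
  by rewrite (vnorm_eq0 v0) mulmx0 !vnorm0 mulr0.
have vp : 0 < vnorm v by rewrite lt0r vn0 vnorm_ge0.
have unit_v : spec_set A (vnorm (A *m ((vnorm v)^-1 *: v))).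
  exists ((vnorm v)^-1 *: v); split => //.
  by rewrite vnormZ ger0_norm ?invr_ge0 ?vnorm_ge0 // mulVf.
have := sup_upper_bound (has_sup_spec_set A) unit_v.
rewrite -scalemxAr vnormZ ger0_norm ?invr_ge0 ?vnorm_ge0 //.
by rewrite ler_pdivrMl // mulrC.
Qed.

Lemma vnorm_trmx_mulmx_le a b (A : 'M[R]_(a, b)) u :
  vnorm (A^T *m u) <= spec_norm A * vnorm u.
Proof.
set z := A^T *m u.
have zz : vnorm z * vnorm z <= (spec_norm A * vnorm u) * vnorm z.
  rewrite -expr2 sqr_vnorm {1}/z dot_mulmxl trmxK.
  apply: le_trans (dot_le_mul_vnorm _ _) _.
  by rewrite (mulrC (spec_norm A)) -mulrA ler_wpM2l ?vnorm_ge0 // vnorm_mulmx_le.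
have [z0|zn0] := eqVneq (vnorm z) 0.
  by rewrite z0 mulr_ge0 ?spec_norm_ge0 ?vnorm_ge0.
by rewrite ler_pM2r ?lt0r ?zn0 ?vnorm_ge0 in zz.
Qed.

Lemma vnorm_mulmx_le_bound a b (A : 'M[R]_(a, b)) v K L :
  spec_norm A <= K -> vnorm v <= L -> vnorm (A *m v) <= K * L.
Proof.
move=> AK vL; apply: le_trans (vnorm_mulmx_le A v) _.
by apply: ler_pM; rewrite ?spec_norm_ge0 ?vnorm_ge0.
Qed.

End SpectralNorm.

(* [B^T (B B^T)^-1] satisfies the Penrose conditions, and the first of them,
   [B X B = B], cancels to [B X = 1] because [B] has full row rank. *)
Lemma mulmx_pinv (R : realType) (n m : nat) (B : 'M[R]_(n, m)) :
  \rank B = n -> B *m pinv B = 1%:M.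
Proof.
move=> rk.
have rf : row_free B by rewrite /row_free rk.
have BBt_unit : B *m B^T \in unitmx.
  rewrite -row_free_unit; apply: inj_row_free => v vBBt.
  have : dot (v *m B)^T (v *m B)^T = 0.
    by rewrite /dot trmxK trmx_mul mulmxA -(mulmxA v) vBBt mul0mx mxE.
  move/dot_eq0/(congr1 trmx); rewrite trmxK trmx0 => vB0.
  by apply: (row_free_inj rf); rewrite vB0 mul0mx.
have BX : B *m (B^T *m invmx (B *m B^T)) = 1%:M by rewrite mulmxA mulmxV.
have pinvB : is_pinv B (B^T *m invmx (B *m B^T)).
  split.
  - by rewrite BX mul1mx.
  - by rewrite -mulmxA BX mulmx1.
  - by rewrite BX trmx1.
  - by rewrite !trmx_mul trmxK trmx_inv trmx_mul trmxK mulmxA.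
have [BXB _ _ _] := xgetPex 0 (ex_intro _ _ pinvB).
by apply: (row_free_inj rf); rewrite mul1mx.
Qed.

Section Projection.
Variable R : realType.

Definition convex k (S : set 'cV[R]_k) :=
  forall a b (l : R), S a -> S b -> 0 <= l -> l <= 1 -> S ((1 - l) *: a + l *: b).

(* Moving from [q] towards [u] by a small fraction [l] cannot bring [z]
   closer, and the first-order term in [l] is [- 2 l <z - q, u - q>]. *)
Lemma is_proj_dot_le0 k (S : set 'cV[R]_k) (z q u : 'cV[R]_k) :
  convex S -> is_proj S z q -> S u -> dot (z - q) (u - q) <= 0.
Proof.
move=> cS [Sq q_min] Su.
have segment l : 0 <= l -> l <= 1 ->
    2 * l * dot (z - q) (u - q) <= l ^+ 2 * dot (u - q) (u - q).
  move=> l0 l1; have /dot_le_vnorm := q_min _ (cS q u l Sq Su l0 l1).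
  have -> : z - ((1 - l) *: q + l *: u) = (z - q) - l *: (u - q).
    by apply/matrixP => i j; rewrite !mxE; ring.
  move: (z - q) (u - q) => e d.
  by rewrite dotBl !dotBr !dotZl !dotZr (dotC d e); nra.
set a := dot (z - q) (u - q) in segment *; set b := dot (u - q) (u - q) in segment.
rewrite leNgt; apply/negP => a_gt0.
have b0 : 0 <= b by exact: dot_ge0.
have ab : 0 < a + b by lra.
have l0 : 0 < a / (a + b) by rewrite divr_gt0.
have := segment (a / (a + b)); rewrite ltW //.
rewrite ler_pdivrMr // mul1r lerDl b0 => /(_ isT isT).
have lab : a / (a + b) * (a + b) = a by rewrite mulfVK // gt_eqF.
move: l0 lab; set l := a / (a + b) => l0 lab.
have := mulr_gt0 l0 a_gt0; have : l * (l * (a + b)) = l * a by rewrite lab.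
nra.
Qed.

Lemma is_proj_dist_le k (S : set 'cV[R]_k) (z q u : 'cV[R]_k) :
  convex S -> is_proj S z q -> S u -> vnorm (q - u) <= vnorm (z - u).
Proof.
move=> cS zq Su; have dq := is_proj_dot_le0 cS zq Su.
apply: vnorm_le_dot; first exact: vnorm_ge0.
rewrite sqr_vnorm.
have -> : z - u = (z - q) - (u - q) by apply/matrixP => i j; rewrite !mxE; ring.
have -> : q - u = - (u - q) by rewrite opprB.
move: dq; move: (z - q) (u - q) => e d dq.
rewrite dotNl dotNr opprK dotBl !dotBr (dotC d e).
have := dot_ge0 e; lra.
Qed.

Lemma convex_ball k (K : R) : convex (@ball_set R k K).
Proof.
move=> a b l; rewrite /ball_set /= => aK bK l0 l1.
apply: le_trans (ler_vnormD _ _) _.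
rewrite !vnormZ !ger0_norm ?subr_ge0 //.
have -> : K = (1 - l) * K + l * K by ring.
by apply: lerD; apply: ler_wpM2l; rewrite ?subr_ge0.
Qed.

(* Radial scaling is the projection onto a ball. *)
Lemma is_proj_ball_ex k (K : R) (z : 'cV[R]_k) :
  0 <= K -> exists q, is_proj (ball_set K) z q.
Proof.
move=> K0; have [zK|Kz] := leP (vnorm z) K.
  by exists z; split => // q' _; rewrite subrr vnorm0 vnorm_ge0.
have zp : 0 < vnorm z by lra.
exists ((K / vnorm z) *: z); split.
  by rewrite /ball_set /= vnormZ ger0_norm ?divr_ge0 ?vnorm_ge0 // divfK ?gt_eqF.
move=> q'; rewrite /ball_set /= => q'K.
rewrite -{1}[z]scale1r -scalerBl vnormZ ger0_norm; last first.
  by rewrite subr_ge0 ler_pdivrMr // mul1r ltW.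
rewrite mulrBl mul1r divfK ?gt_eqF //.
by have := ler_vnormD (z - q') q'; rewrite subrK; lra.
Qed.

Lemma proj_ballP k (K : R) (z : 'cV[R]_k) :
  0 <= K -> is_proj (ball_set K) z (proj (ball_set K) z).
Proof. by move=> K0; apply: xgetPex; exact: is_proj_ball_ex. Qed.

Lemma ball_set_dist_le k (K : R) (a b : 'cV[R]_k) :
  ball_set K a -> ball_set K b -> vnorm (a - b) <= 2 * K.
Proof. by rewrite /ball_set /= => aK bK; have := ler_vnormB a b; lra. Qed.

Lemma convex_Kbar p h (KTh Kc : R) : convex (@Kbar_set R p h KTh Kc).
Proof.
move=> a b l [a1 a2] [b1 b2] l0 l1.
by split; rewrite linearD /= !linearZ /=; apply: convex_ball.
Qed.

(* [Kbar_set] is a product of balls, so the projection acts blockwise. *)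
Lemma proj_KbarP p h (KTh Kc : R) (z : 'cV[R]_(p + h)) : 0 <= KTh -> 0 <= Kc ->
  is_proj (Kbar_set KTh Kc) z (proj (Kbar_set KTh Kc) z).
Proof.
move=> KTh0 Kc0; apply: xgetPex.
have [qu [Squ qu_min]] := is_proj_ball_ex (usubmx z) KTh0.
have [qd [Sqd qd_min]] := is_proj_ball_ex (dsubmx z) Kc0.
exists (col_mx qu qd); split; first by rewrite /Kbar_set /= col_mxKu col_mxKd.
move=> q' [q'u q'd]; apply: vnorm_le_dot; first exact: vnorm_ge0.
rewrite sqr_vnorm dot_submx (dot_submx (z - q')) !linearB /= col_mxKu col_mxKd.
by apply: lerD; apply: dot_le_vnorm; [apply: qu_min | apply: qd_min].
Qed.

Lemma Kbar_set_dist_le p h (KTh Kc : R) (a b : 'cV[R]_(p + h)) :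
  Kbar_set KTh Kc a -> Kbar_set KTh Kc b ->
  vnorm (a - b) <= 2 * Num.sqrt (KTh ^+ 2 + Kc ^+ 2).
Proof.
move=> [a1 a2] [b1 b2].
have du := ball_set_dist_le a1 b1; have dd := ball_set_dist_le a2 b2.
apply: vnorm_le_dot; first by rewrite mulr_ge0 ?sqrtr_ge0.
have sq : Num.sqrt (KTh ^+ 2 + Kc ^+ 2) ^+ 2 = KTh ^+ 2 + Kc ^+ 2.
  by rewrite sqr_sqrtr // addr_ge0 // sqr_ge0.
rewrite dot_submx !linearB /= -!sqr_vnorm exprMn sq.
have := vnorm_ge0 (usubmx a - usubmx b); have := vnorm_ge0 (dsubmx a - dsubmx b).
nra.
Qed.

End Projection.

Section OnlineGradientDescent.
Variable R : realType.

Lemma ogd_step_le k (S : set 'cV[R]_k) (z g z' u : 'cV[R]_k) (eta : R) :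
  convex S -> is_proj S (z - eta *: g) z' -> S u -> 0 < eta ->
  dot g (z - u) <=
    (dot (z - u) (z - u) - dot (z' - u) (z' - u)) / (2 * eta) + eta / 2 * dot g g.
Proof.
move=> cS zz' Su eta0.
have /dot_le_vnorm := is_proj_dist_le cS zz' Su.
have -> : z - eta *: g - u = (z - u) - eta *: g.
  by apply/matrixP => i j; rewrite !mxE; ring.
move: (z - u) (z' - u) => e e'.
rewrite dotBl !dotBr !dotZl !dotZr (dotC e g) => step.
have -> : (dot e e - dot e' e') / (2 * eta) + eta / 2 * dot g g
        = (dot e e - dot e' e' + eta ^+ 2 * dot g g) / (2 * eta).
  by field; rewrite gt_eqF.
by rewrite ler_pdivlMr ?mulr_gt0 //; lra.
Qed.

Lemma abel_sum_le (a d : nat -> R) M T :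
  (forall t, 0 <= a t <= a t.+1) -> (forall t, (1 <= t)%N -> 0 <= d t <= M) ->
  \sum_(1 <= t < T.+1) a t * (d t - d t.+1) + a T * d T.+1 <= a T * M.
Proof.
move=> a_incr d_bnd; elim: T => [|T IH].
  by rewrite big_geq // add0r; have /andP[? _] := a_incr 0%N;
     have /andP[_ ?] := d_bnd 1%N isT; exact: ler_wpM2l.
rewrite big_nat_recr //=.
have /andP[aT aT1] := a_incr T.
have /andP[d1 dM] := d_bnd T.+1 isT; have /andP[d2 _] := d_bnd T.+2 isT.
nra.
Qed.

Lemma sum_inv_sqrt_le T :
  \sum_(1 <= t < T.+1) (Num.sqrt (t%:R : R))^-1 <= 2 * Num.sqrt (T%:R).
Proof.
elim: T => [|T IH]; first by rewrite big_geq // sqrtr0 mulr0.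
rewrite big_nat_recr //=; move: IH.
set s := Num.sqrt (T%:R : R); set s' := Num.sqrt (T.+1%:R : R).
have s0 : 0 <= s by exact: sqrtr_ge0.
have s'p : 0 < s' by rewrite sqrtr_gt0 ltr0n.
have ss : s' ^+ 2 = s ^+ 2 + 1 by rewrite !sqr_sqrtr ?ler0n // -natr1.
have ss' : s <= s' by rewrite ler_wsqrtr // ler_nat.
have : s'^-1 <= 2 * (s' - s) by rewrite -[X in X <= _]mul1r ler_pdivrMr //; nra.
lra.
Qed.

(* The step bounds telescope with weights [1 / (2 eta t) = G sqrt t / (2 D)]. *)
Lemma ogd_regret_le_pos k (S : set 'cV[R]_k) (z g : nat -> 'cV[R]_k) (eta : nat -> R)
    (u : 'cV[R]_k) (D G : R) (T : nat) :
  convex S -> S u -> S (z 1%N) ->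
  (forall t, (1 <= t)%N -> is_proj S (z t - eta t *: g t) (z t.+1)) ->
  (forall a b, S a -> S b -> vnorm (a - b) <= D) ->
  (forall t, (1 <= t <= T)%N -> vnorm (g t) <= G) ->
  0 < D -> 0 < G ->
  (forall t, eta t = D / (G * Num.sqrt t%:R)) ->
  \sum_(1 <= t < T.+1) dot (g t) (z t - u) <= 3 / 2 * D * G * Num.sqrt T%:R.
Proof.
move=> cS Su Sz1 z_step diam g_bnd Dp Gp eta_def.
have Sz t : (1 <= t)%N -> S (z t).
  by case: t => [|[|t]] // _; have [] := z_step t.+1 isT.
pose a t := G * Num.sqrt (t%:R : R) / (2 * D).
pose d t := dot (z t - u) (z t - u).
have step t : (1 <= t <= T)%N ->
    dot (g t) (z t - u) <= a t * (d t - d t.+1) + D * G / 2 * (Num.sqrt (t%:R : R))^-1.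
  move=> /andP[t1 tT]; have st : 0 < Num.sqrt (t%:R : R) by rewrite sqrtr_gt0 ltr0n.
  have eta_t : 0 < eta t by rewrite eta_def divr_gt0 ?mulr_gt0.
  apply: le_trans (ogd_step_le cS (z_step t t1) Su eta_t) _.
  have -> : (d t - d t.+1) / (2 * eta t) = a t * (d t - d t.+1).
    by rewrite eta_def /a; field; rewrite !gt_eqF.
  have -> : D * G / 2 * (Num.sqrt t%:R)^-1 = eta t / 2 * G ^+ 2.
    by rewrite eta_def; field; rewrite !gt_eqF.
  rewrite lerD2l ler_wpM2l ?divr_ge0 ?(ltW eta_t) // -sqr_vnorm.
  by have := g_bnd t; rewrite t1 tT => /(_ isT); have := vnorm_ge0 (g t); nra.
have sum_step : \sum_(1 <= t < T.+1) dot (g t) (z t - u) <=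
    \sum_(1 <= t < T.+1) a t * (d t - d t.+1)
    + D * G / 2 * \sum_(1 <= t < T.+1) (Num.sqrt (t%:R : R))^-1.
  rewrite mulr_sumr -big_split /=.
  by apply: ler_sum_nat => t; rewrite ltnS; exact: step.
have a_incr t : 0 <= a t <= a t.+1.
  rewrite /a !divr_ge0 ?mulr_ge0 ?sqrtr_ge0 ?(ltW Dp) ?(ltW Gp) //=.
  by rewrite ler_pM2r ?invr_gt0 ?mulr_gt0 // ler_pM2l // ler_wsqrtr // ler_nat.
have d_bnd t : (1 <= t)%N -> 0 <= d t <= D ^+ 2.
  move=> t1; rewrite /d dot_ge0 -sqr_vnorm.
  by have := diam _ _ (Sz t t1) Su; have := vnorm_ge0 (z t - u); nra.
have abel := @abel_sum_le a d (D ^+ 2) T a_incr d_bnd.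
have ad : 0 <= a T * d T.+1.
  by have /andP[? _] := a_incr T; have /andP[? _] := d_bnd T.+1 isT; exact: mulr_ge0.
have aT : a T * D ^+ 2 = D * G * Num.sqrt T%:R / 2 by rewrite /a; field; rewrite gt_eqF.
have := ler_wpM2l (divr_ge0 (mulr_ge0 (ltW Dp) (ltW Gp)) (ler0n _ 2)) (sum_inv_sqrt_le T).
lra.
Qed.

Lemma ogd_regret_le k (S : set 'cV[R]_k) (z g : nat -> 'cV[R]_k) (eta : nat -> R)
    (u : 'cV[R]_k) (D G : R) (T : nat) :
  convex S -> S u -> S (z 1%N) ->
  (forall t, (1 <= t)%N -> is_proj S (z t - eta t *: g t) (z t.+1)) ->
  (forall a b, S a -> S b -> vnorm (a - b) <= D) ->
  (forall t, (1 <= t <= T)%N -> vnorm (g t) <= G) ->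
  0 <= D -> 0 <= G ->
  (forall t, eta t = D / (G * Num.sqrt t%:R)) ->
  \sum_(1 <= t < T.+1) dot (g t) (z t - u) <= 3 / 2 * D * G * Num.sqrt T%:R.
Proof.
move=> cS Su Sz1 z_step diam g_bnd D0 G0 eta_def.
have [D_eq0|Dn0] := eqVneq D 0.
  rewrite D_eq0 mulr0 !mul0r big_nat big1 // => t /andP[t1 _].
  have Szt : S (z t) by case: t t1 => [|[|t]] // _; have [] := z_step t.+1 isT.
  have -> : z t - u = 0 by apply: vnorm_le0; rewrite -D_eq0 diam.
  by rewrite dotC dot0l.
have [G_eq0|Gn0] := eqVneq G 0.
  rewrite G_eq0 mulr0 mul0r big_nat big1 // => t tT.
  have -> : g t = 0 by apply: vnorm_le0; rewrite -G_eq0 g_bnd.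
  by rewrite dot0l.
have Dp : 0 < D by rewrite lt0r Dn0.
have Gp : 0 < G by rewrite lt0r Gn0.
exact: ogd_regret_le_pos cS Su Sz1 z_step diam g_bnd Dp Gp eta_def.
Qed.

End OnlineGradientDescent.

Section AverageControlError.
Variable R : realType.

(* This also holds for [k = 0], where [0 / 0 = 0]. *)
Lemma natr_div_sqrt k : k%:R / Num.sqrt k%:R = Num.sqrt k%:R :> R.
Proof.
have [->|k0] := posnP k; first by rewrite sqrtr0 invr0 mulr0.
by rewrite -{1}(sqr_sqrtr (ler0n R k)) expr2 mulfK // gt_eqF // sqrtr_gt0 ltr0n.
Qed.

Lemma ler_sum_const_add (N : nat) (a b D : R) (d : nat -> R) :
  \sum_(1 <= i < N.+1) d i <= D ->
  \sum_(1 <= i < N.+1) (a + d i + b) <= N%:R * (a + b) + D.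
Proof.
move=> dD; rewrite !big_split /= !sumr_const_nat subSS subn0.
by rewrite -[a *+ _]mulr_natl -[b *+ _]mulr_natl; lra.
Qed.

Lemma sqr_sum_le (I : Type) (r : seq I) (a : I -> R) :
  (\sum_(i <- r) a i) ^+ 2 <= (size r)%:R * \sum_(i <- r) a i ^+ 2.
Proof.
elim: r => [|j r IH]; first by rewrite !big_nil expr0n /= mul0r.
rewrite !big_cons /= -natr1.
set S := \sum_(i <- r) a i in IH *; set Q := \sum_(i <- r) a i ^+ 2 in IH *.
set M := (size r)%:R in IH *.
have M0 : 0 <= M by rewrite ler0n.
have Q0 : 0 <= Q by rewrite sumr_ge0 // => i _; rewrite sqr_ge0.
have [Mz|Mn0] := eqVneq M 0.
  rewrite Mz mul0r in IH.
  have -> : S = 0 by apply/eqP; rewrite -sqrf_eq0 eq_le IH sqr_ge0.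
  by rewrite Mz; nra.
have Mp : 0 < M by rewrite lt0r Mn0.
have : M * (2 * S * a j) <= M * (Q + M * a j ^+ 2) by have := sqr_ge0 (S - M * a j); nra.
rewrite ler_pM2l //; nra.
Qed.

Lemma geometric_conv_rec (rho : R) (a : nat -> R) t : (1 <= t)%N ->
  \sum_(1 <= k < t.+1) rho ^+ (t.+1 - 1 - k) * a k =
  rho * \sum_(1 <= k < t) rho ^+ (t - 1 - k) * a k + a t.
Proof.
move=> t1; rewrite big_nat_recr //= subn1 /= subnn expr0 mul1r; congr (_ + _).
rewrite mulr_sumr; apply: eq_big_nat => k /andP[_ kt].
rewrite mulrA -exprS; congr (_ ^+ _ * _).
lia.
Qed.

(* [I t] below satisfies [I (t + 1) = rho I t + a t], so
   [(1 - rho) \sum_(t <= T) I t + I (T + 1) = \sum_(t <= T) a t]. *)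
Lemma sum_geometric_conv_le (rho : R) (a : nat -> R) T :
  0 <= rho -> rho < 1 -> (forall k, 0 <= a k) ->
  \sum_(1 <= t < T.+1) \sum_(1 <= k < t) rho ^+ (t - 1 - k) * a k
    <= (1 - rho)^-1 * \sum_(1 <= t < T.+1) a t.
Proof.
move=> r0 r1 a0.
pose I t := \sum_(1 <= k < t) rho ^+ (t - 1 - k) * a k.
have I0 t : 0 <= I t by apply: sumr_ge0 => k _; rewrite mulr_ge0 ?exprn_ge0.
have balance T' : (1 - rho) * \sum_(1 <= t < T'.+1) I t + I T'.+1 =
                  \sum_(1 <= t < T'.+1) a t.
  elim: T' => [|T' IH]; first by rewrite !big_geq // mulr0 add0r /I big_geq.
  rewrite (big_nat_recr T'.+1) // (big_nat_recr T'.+1) //= -IH /I.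
  by rewrite (@geometric_conv_rec rho a T'.+1) //; ring.
rewrite ler_pdivlMl ?subr_gt0 //; have := balance T; have := I0 T.+1.
rewrite /I; lra.
Qed.

Lemma eISS_sum_le n (f0 : 'cV[R]_n -> 'cV[R]_n) beta gamma rho (x v : nat -> 'cV[R]_n) T :
  eISS f0 beta gamma rho -> 0 <= gamma -> 0 <= rho -> rho < 1 ->
  x 1%N = 0 -> (forall k, (1 <= k)%N -> x k.+1 = f0 (x k) + v k) ->
  \sum_(1 <= t < T.+1) vnorm (x t) <= gamma / (1 - rho) * \sum_(1 <= t < T.+1) vnorm (v t).
Proof.
move=> iss g0 r0 r1 x1 x_next.
apply: le_trans (_ : \sum_(1 <= t < T.+1)
    gamma * \sum_(1 <= k < t) rho ^+ (t - 1 - k) * vnorm (v k) <= _).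
  apply: ler_sum_nat => t /andP[t1 _].
  have := iss x v t t1 (fun k kt => x_next k (proj1 (andP kt))).
  by rewrite x1 vnorm0 mulr0 add0r.
rewrite -mulr_sumr -mulrA ler_wpM2l //.
by apply: sum_geometric_conv_le => // k; exact: vnorm_ge0.
Qed.

(* e-ISS turns the state norms into a geometric convolution of the
   perturbation norms, and two applications of Cauchy-Schwarz bound the
   total of these by [T N sqrt S]. *)
Lemma ACE_le n (f0 : 'cV[R]_n -> 'cV[R]_n) beta gamma rho N T
    (x v : nat -> nat -> 'cV[R]_n) (S : R) :
  (0 < N)%N -> (0 < T)%N -> 0 <= gamma -> 0 <= rho -> rho < 1 -> eISS f0 beta gamma rho ->
  (forall i, (1 <= i <= N)%N -> x i 1%N = 0) ->
  (forall i k, (1 <= i <= N)%N -> (1 <= k)%N -> x i k.+1 = f0 (x i k) + v i k) ->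
  \sum_(1 <= i < N.+1) \sum_(1 <= t < T.+1) vnorm (v i t) ^+ 2 <= (T * N)%:R * S ->
  ACE N T x <= gamma / (1 - rho) * Num.sqrt S.
Proof.
move=> N0 T0 g0 r0 r1 iss x1 x_next v_bnd.
set X := \sum_(1 <= i < N.+1) \sum_(1 <= t < T.+1) vnorm (v i t).
have TN0 : 0 < (T * N)%:R :> R by rewrite ltr0n muln_gt0 N0 T0.
have gr0 : 0 <= gamma / (1 - rho) by rewrite divr_ge0 // subr_ge0 ltW.
have x_le_v : \sum_(1 <= i < N.+1) \sum_(1 <= t < T.+1) vnorm (x i t)
    <= gamma / (1 - rho) * X.
  rewrite /X mulr_sumr; apply: ler_sum_nat => i; rewrite ltnS => Ni.
  exact: eISS_sum_le T iss g0 r0 r1 (x1 i Ni) (x_next i ^~ Ni).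
have X2 : X ^+ 2 <= (T * N)%:R *
    \sum_(1 <= i < N.+1) \sum_(1 <= t < T.+1) vnorm (v i t) ^+ 2.
  have size_iota k : size (index_iota 1 k.+1) = k by rewrite size_iota subn1.
  apply: le_trans (sqr_sum_le _ _) _.
  rewrite size_iota natrM (mulrC T%:R) -mulrA ler_wpM2l ?ler0n // mulr_sumr.
  apply: ler_sum => i _.
  by have := sqr_sum_le (index_iota 1 T.+1) (fun t => vnorm (v i t)); rewrite size_iota.
have S0 : 0 <= S.
  rewrite -(pmulr_rge0 _ TN0); apply: le_trans v_bnd.
  by apply: sumr_ge0 => i _; apply: sumr_ge0 => t _; exact: sqr_ge0.
have X_le : X <= (T * N)%:R * Num.sqrt S.
  have Y0 := mulr_ge0 (ltW TN0) (sqrtr_ge0 S).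
  have : X ^+ 2 <= ((T * N)%:R * Num.sqrt S) ^+ 2.
    rewrite exprMn sqr_sqrtr // expr2 -mulrA.
    by apply: le_trans X2 _; rewrite ler_wpM2l // ltW.
  by move: Y0; set Y := _ * Num.sqrt S; nra.
rewrite /ACE ler_pdivrMl // mulrCA.
exact: le_trans x_le_v (ler_wpM2l gr0 X_le).
Qed.

End AverageControlError.

Section Loss.
Variables (R : realType) (n p h : nat) (A1 : 'M[R]_(n, p)) (A2 : 'M[R]_(n, h)).
Variables (Theta : 'cV[R]_p) (c : 'cV[R]_h) (w : 'cV[R]_n).
Local Notation y := (A1 *m Theta + A2 *m c - w).

(* The loss is a convex quadratic whose value at the true parameters is [|w|^2]. *)
Lemma sqr_resid_le_grad Th ch :
  vnorm (resid A1 A2 Th ch y) ^+ 2 <=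
  vnorm w ^+ 2 + dot (grad_Th A1 A2 Th ch y) (Th - Theta)
               + dot (grad_c A1 A2 Th ch y) (ch - c).
Proof.
rewrite /grad_Th /grad_c !dotZl !dot_mulmxl !trmxK !sqr_vnorm.
set r := resid A1 A2 Th ch y.
have -> : w = r - (A1 *m (Th - Theta) + A2 *m (ch - c)).
  by apply/matrixP => i j; rewrite /r /resid !mulmxBr !mxE; ring.
clearbody r; move: (A1 *m (Th - Theta)) (A2 *m (ch - c)) => d1 d2.
rewrite dotBl !dotBr (dotC (d1 + d2) r) dotDr.
by have := dot_ge0 (d1 + d2); lra.
Qed.

Variables (K1 K2 KTh Kc W : R).
Hypotheses (A1K : spec_norm A1 <= K1) (A2K : spec_norm A2 <= K2).
Hypotheses (ThetaK : vnorm Theta <= KTh) (cK : vnorm c <= Kc) (wW : vnorm w <= W).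

Lemma vnorm_resid_le Th ch : vnorm Th <= KTh -> vnorm ch <= Kc ->
  vnorm (resid A1 A2 Th ch y) <= 2 * K1 * KTh + 2 * K2 * Kc + W.
Proof.
move=> ThK chK; rewrite /resid; apply: le_trans (ler_vnormB _ _) _.
have -> : 2 * K1 * KTh + 2 * K2 * Kc + W = (K1 * KTh + K2 * Kc) + (K1 * KTh + K2 * Kc + W).
  by ring.
apply: lerD; last apply: le_trans (ler_vnormB _ _) (lerD _ wW);
  by apply: le_trans (ler_vnormD _ _) _; apply: lerD; apply: vnorm_mulmx_le_bound.
Qed.

Lemma vnorm_grad_Th_le Th ch : vnorm Th <= KTh -> vnorm ch <= Kc ->
  vnorm (grad_Th A1 A2 Th ch y) <= 4 * K1 ^+ 2 * KTh + 4 * K1 * K2 * Kc + 2 * K1 * W.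
Proof.
move=> ThK chK; rewrite /grad_Th vnormZ ger0_norm // -mulrA.
set r := resid A1 A2 Th ch y.
have := ler_wpM2l (le_trans (spec_norm_ge0 A1) A1K) (vnorm_resid_le ThK chK).
have := ler_wpM2r (vnorm_ge0 r) A1K; have := vnorm_trmx_mulmx_le A1 r.
lra.
Qed.

Lemma vnorm_grad_c_le Th ch : vnorm Th <= KTh -> vnorm ch <= Kc ->
  vnorm (grad_c A1 A2 Th ch y) <= 4 * K2 ^+ 2 * Kc + 4 * K1 * K2 * KTh + 2 * K2 * W.
Proof.
move=> ThK chK; rewrite /grad_c vnormZ ger0_norm // -mulrA.
set r := resid A1 A2 Th ch y.
have := ler_wpM2l (le_trans (spec_norm_ge0 A2) A2K) (vnorm_resid_le ThK chK).
have := ler_wpM2r (vnorm_ge0 r) A2K; have := vnorm_trmx_mulmx_le A2 r.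
lra.
Qed.

End Loss.

Section ClosedLoop.
Variables (R : realType) (n m p h : nat).
Variables (f0 : 'cV[R]_n -> 'cV[R]_n) (B : 'cV[R]_n -> 'M[R]_(n, m)).
Variables (Y1 : 'cV[R]_n -> 'M[R]_(n, p)) (Y2 : 'cV[R]_n -> 'M[R]_(n, h)) (Theta : 'cV[R]_p).

Definition obs (ci : 'cV[R]_h) (wt x : 'cV[R]_n) : 'cV[R]_n :=
  Y1 x *m Theta + Y2 x *m ci - wt.

Lemma cl_obs_next ci wt x fhat :
  cl_obs f0 B x fhat (cl_next f0 B Y1 Y2 Theta ci wt x fhat) = obs ci wt x.
Proof.
rewrite /cl_obs /cl_next /obs.
move: (f0 x) (B x *m _) (Y1 x *m Theta + Y2 x *m ci) => a b F.
by apply/matrixP => i j; rewrite !mxE; ring.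
Qed.

Hypothesis B_full_rank : forall x, \rank (B x) = n.

(* Full actuation lets the input cancel [fhat] exactly. *)
Lemma cl_next_resid ci wt x Th ch :
  cl_next f0 B Y1 Y2 Theta ci wt x (Y1 x *m Th + Y2 x *m ch) =
  f0 x + resid (Y1 x) (Y2 x) Th ch (obs ci wt x).
Proof.
rewrite /cl_next mulmxA mulmx_pinv // mul1mx /resid /obs.
move: (f0 x) (Y1 x *m Th + Y2 x *m ch) (Y1 x *m Theta + Y2 x *m ci) => a b F.
by apply/matrixP => i j; rewrite !mxE; ring.
Qed.

Variables (K1 K2 KTh Kc W : R).
Hypotheses (Y1K : forall x, spec_norm (Y1 x) <= K1) (Y2K : forall x, spec_norm (Y2 x) <= K2).
Hypotheses (ThetaK : vnorm Theta <= KTh) (W0 : 0 <= W).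
Local Notation C1 := (4 * K1 ^+ 2 * KTh + 4 * K1 * K2 * Kc + 2 * K1 * W).
Local Notation C2 := (4 * K2 ^+ 2 * Kc + 4 * K1 * K2 * KTh + 2 * K2 * W).

Let K10 : 0 <= K1. Proof. exact: le_trans (spec_norm_ge0 _) (Y1K 0). Qed.
Let K20 : 0 <= K2. Proof. exact: le_trans (spec_norm_ge0 _) (Y2K 0). Qed.
Let KTh0 : 0 <= KTh. Proof. exact: le_trans (vnorm_ge0 _) ThetaK. Qed.

Section OMACEnvironment.
Variables (ci : 'cV[R]_h) (wi : nat -> 'cV[R]_n) (eta : nat -> R).
Variables (Thh : 'cV[R]_p) (ch1 : 'cV[R]_h) (T : nat).
Hypotheses (ciK : vnorm ci <= Kc) (wiW : forall t, (1 <= t <= T)%N -> vnorm (wi t) <= W).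
Hypotheses (ThhK : vnorm Thh <= KTh) (ch1K : vnorm ch1 <= Kc).
Hypothesis eta_def : forall t, eta t = 2 * Kc / (C2 * Num.sqrt t%:R).

Local Notation st := (omac_env f0 B Y1 Y2 Theta ci wi eta Kc Thh ch1).
Local Notation x t := (st t.-1).1.
Local Notation ch t := (st t.-1).2.
Local Notation y t := (obs ci (wi t) (x t)).

Let Kc0 : 0 <= Kc. Proof. exact: le_trans (vnorm_ge0 _) ciK. Qed.

Lemma omac_env_next t : (1 <= t)%N ->
  x t.+1 = f0 (x t) + resid (Y1 (x t)) (Y2 (x t)) Thh (ch t) (y t).
Proof. by case: t => [//|t _]; rewrite /= cl_next_resid. Qed.

Lemma omac_env_ch_next t : (1 <= t)%N ->
  ch t.+1 = proj (ball_set Kc) (ch t - eta t *: grad_c (Y1 (x t)) (Y2 (x t)) Thh (ch t) (y t)).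
Proof. by case: t => [//|t _]; rewrite /= cl_obs_next. Qed.

Lemma omac_env_ch_ball t : ball_set Kc (ch t).
Proof.
case: t => [|[|t]]; [exact: ch1K | exact: ch1K |].
by rewrite omac_env_ch_next //; exact: (proj1 (proj_ballP _ Kc0)).
Qed.

Lemma omac_env_regret :
  \sum_(1 <= t < T.+1) vnorm (resid (Y1 (x t)) (Y2 (x t)) Thh (ch t) (y t)) ^+ 2 <=
  T%:R * W ^+ 2
  + dot (\sum_(1 <= t < T.+1) grad_Th (Y1 (x t)) (Y2 (x t)) Thh (ch t) (y t)) (Thh - Theta)
  + 3 / 2 * (2 * Kc) * C2 * Num.sqrt T%:R.
Proof.
pose gc t := grad_c (Y1 (x t)) (Y2 (x t)) Thh (ch t) (y t).
have inner : \sum_(1 <= t < T.+1) dot (gc t) (ch t - ci) <=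
             3 / 2 * (2 * Kc) * C2 * Num.sqrt T%:R.
  apply: (@ogd_regret_le _ _ (ball_set Kc) (fun t => ch t) gc eta ci (2 * Kc) C2 T
           (@convex_ball _ _ Kc) ciK ch1K).
  - by move=> t t1; rewrite /gc omac_env_ch_next //; exact: proj_ballP.
  - exact: ball_set_dist_le.
  - move=> t /andP[t1 tT]; have wt : vnorm (wi t) <= W by apply: wiW; rewrite t1.
    by have := vnorm_grad_c_le (Y1K (x t)) (Y2K (x t)) ThetaK ciK wt ThhK (omac_env_ch_ball t).
  - by rewrite mulr_ge0.
  - by rewrite !addr_ge0 ?mulr_ge0 ?sqr_ge0.
  - exact: eta_def.
have step t : (1 <= t < T.+1)%N ->
    vnorm (resid (Y1 (x t)) (Y2 (x t)) Thh (ch t) (y t)) ^+ 2 <=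
    W ^+ 2 + dot (grad_Th (Y1 (x t)) (Y2 (x t)) Thh (ch t) (y t)) (Thh - Theta)
           + dot (gc t) (ch t - ci).
  move=> /andP[t1 tT]; rewrite /gc /obs.
  have := sqr_resid_le_grad (Y1 (x t)) (Y2 (x t)) Theta ci (wi t) Thh (ch t).
  have : vnorm (wi t) <= W by apply: wiW; rewrite t1 -ltnS.
  have := vnorm_ge0 (wi t); nra.
apply: le_trans (ler_sum_nat step) _.
rewrite !big_split /= sumr_const_nat subSS subn0 [T%:R * _]mulr_natl dot_suml.
by rewrite !lerD2l.
Qed.

Lemma omac_env_grad_sum_le :
  vnorm (\sum_(1 <= t < T.+1) grad_Th (Y1 (x t)) (Y2 (x t)) Thh (ch t) (y t)) <= C1 * T%:R.
Proof.
apply: le_trans (ler_vnorm_sum _ _ _) _.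
apply: le_trans (_ : _ <= \sum_(1 <= t < T.+1) C1) _; last first.
  by rewrite sumr_const_nat subSS subn0 mulr_natr.
apply: ler_sum_nat => t /andP[t1 tT].
have wt : vnorm (wi t) <= W by apply: wiW; rewrite t1 -ltnS.
by have := vnorm_grad_Th_le (Y1K (x t)) (Y2K (x t)) ThetaK ciK wt ThhK (omac_env_ch_ball t).
Qed.

End OMACEnvironment.
Section BaselineEnvironment.
Variables (ci : 'cV[R]_h) (wi : nat -> 'cV[R]_n) (eta : nat -> R).
Variables (a1 : 'cV[R]_(p + h)) (T : nat).
Hypotheses (ciK : vnorm ci <= Kc) (wiW : forall t, (1 <= t <= T)%N -> vnorm (wi t) <= W).
Hypothesis a1K : Kbar_set KTh Kc a1.
Hypothesis eta_def : forall t, eta t =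
  2 * Num.sqrt (KTh ^+ 2 + Kc ^+ 2) / (Num.sqrt (C1 ^+ 2 + C2 ^+ 2) * Num.sqrt t%:R).

Local Notation st := (base_env f0 B Y1 Y2 Theta ci wi eta KTh Kc a1).
Local Notation x t := (st t.-1).1.
Local Notation al t := (st t.-1).2.
Local Notation Th t := (usubmx (al t)).
Local Notation ch t := (dsubmx (al t)).
Local Notation y t := (obs ci (wi t) (x t)).
Local Notation grad t := (col_mx (grad_Th (Y1 (x t)) (Y2 (x t)) (Th t) (ch t) (y t))
                                 (grad_c (Y1 (x t)) (Y2 (x t)) (Th t) (ch t) (y t))).

Let Kc0 : 0 <= Kc. Proof. exact: le_trans (vnorm_ge0 _) ciK. Qed.

Lemma base_env_next t : (1 <= t)%N ->
  x t.+1 = f0 (x t) + resid (Y1 (x t)) (Y2 (x t)) (Th t) (ch t) (y t).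
Proof. by case: t => [//|t _]; rewrite /= cl_next_resid. Qed.

Lemma base_env_al_next t : (1 <= t)%N ->
  al t.+1 = proj (Kbar_set KTh Kc) (al t - eta t *: grad t).
Proof. by case: t => [//|t _]; rewrite /= cl_obs_next. Qed.

Lemma base_env_Kbar t : Kbar_set KTh Kc (al t).
Proof.
case: t => [|[|t]]; [exact: a1K | exact: a1K |].
by rewrite base_env_al_next //; exact: (proj1 (proj_KbarP _ KTh0 Kc0)).
Qed.

Lemma base_env_grad_le t : (1 <= t <= T)%N ->
  vnorm (grad t) <= Num.sqrt (C1 ^+ 2 + C2 ^+ 2).
Proof.
move=> /wiW wt; have [ThK chK] := base_env_Kbar t.
have := vnorm_grad_Th_le (Y1K (x t)) (Y2K (x t)) ThetaK ciK wt ThK chK.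
have := vnorm_grad_c_le (Y1K (x t)) (Y2K (x t)) ThetaK ciK wt ThK chK.
rewrite /obs => gc_le gTh_le; apply: vnorm_le_dot; first exact: sqrtr_ge0.
have sq : Num.sqrt (C1 ^+ 2 + C2 ^+ 2) ^+ 2 = C1 ^+ 2 + C2 ^+ 2.
  by rewrite sqr_sqrtr // addr_ge0 // sqr_ge0.
rewrite -sqr_vnorm sqr_vnorm_col_mx sq.
have := vnorm_ge0 (grad_c (Y1 (x t)) (Y2 (x t)) (Th t) (ch t) (y t)).
have := vnorm_ge0 (grad_Th (Y1 (x t)) (Y2 (x t)) (Th t) (ch t) (y t)).
rewrite /obs; nra.
Qed.

Lemma base_env_regret :
  \sum_(1 <= t < T.+1) vnorm (resid (Y1 (x t)) (Y2 (x t)) (Th t) (ch t) (y t)) ^+ 2 <=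
  T%:R * W ^+ 2 + 3 / 2 * (2 * Num.sqrt (KTh ^+ 2 + Kc ^+ 2))
                  * Num.sqrt (C1 ^+ 2 + C2 ^+ 2) * Num.sqrt T%:R.
Proof.
have ThetaciK : Kbar_set KTh Kc (col_mx Theta ci).
  by rewrite /Kbar_set /= col_mxKu col_mxKd.
have ogd : \sum_(1 <= t < T.+1) dot (grad t) (al t - col_mx Theta ci) <=
    3 / 2 * (2 * Num.sqrt (KTh ^+ 2 + Kc ^+ 2)) * Num.sqrt (C1 ^+ 2 + C2 ^+ 2)
    * Num.sqrt T%:R.
  apply: (@ogd_regret_le _ _ (Kbar_set KTh Kc) (fun t => al t) (fun t => grad t) eta
           (col_mx Theta ci) _ _ T (@convex_Kbar _ p h KTh Kc) ThetaciK a1K).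
  - by move=> t t1; rewrite base_env_al_next //; exact: proj_KbarP.
  - exact: Kbar_set_dist_le.
  - exact: base_env_grad_le.
  - by rewrite mulr_ge0 ?sqrtr_ge0.
  - exact: sqrtr_ge0.
  - exact: eta_def.
have step t : (1 <= t < T.+1)%N ->
    vnorm (resid (Y1 (x t)) (Y2 (x t)) (Th t) (ch t) (y t)) ^+ 2 <=
    W ^+ 2 + dot (grad t) (al t - col_mx Theta ci).
  move=> /andP[t1 tT].
  rewrite dot_submx !linearB /= !col_mxKu !col_mxKd /obs.
  have := sqr_resid_le_grad (Y1 (x t)) (Y2 (x t)) Theta ci (wi t) (Th t) (ch t).
  have : vnorm (wi t) <= W by apply: wiW; rewrite t1 -ltnS.
  have := vnorm_ge0 (wi t); nra.
apply: le_trans (ler_sum_nat step) _.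
by rewrite big_split /= sumr_const_nat subSS subn0 [T%:R * _]mulr_natl lerD2l.
Qed.

End BaselineEnvironment.

Section Controllers.
Variables (beta gamma rho : R).
Hypotheses (iss : eISS f0 beta gamma rho) (gamma0 : 0 <= gamma) (rho0 : 0 <= rho).
Hypothesis rho1 : rho < 1.
Variables (c : nat -> 'cV[R]_h) (w : nat -> nat -> 'cV[R]_n) (N T : nat).
Hypotheses (N0 : (0 < N)%N) (T0 : (0 < T)%N).
Hypothesis cK : forall i, (1 <= i <= N)%N -> vnorm (c i) <= Kc.
Hypothesis wW : forall i t, (1 <= i <= N)%N -> (1 <= t <= T)%N -> vnorm (w i t) <= W.

Let Kc0 : 0 <= Kc.
Proof. by apply: le_trans (vnorm_ge0 _) (cK (i := 1) _); rewrite leqnn N0. Qed.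
Let C1_ge0 : 0 <= C1. Proof. by rewrite !addr_ge0 ?mulr_ge0 ?sqr_ge0. Qed.

Section OMAC.
Variables (eta etabar : nat -> R) (Th1 : 'cV[R]_p) (ch1 : nat -> 'cV[R]_h).
Hypotheses (Th1K : vnorm Th1 <= KTh) (ch1K : forall i, (1 <= i <= N)%N -> vnorm (ch1 i) <= Kc).
Hypothesis etabar_def : forall i, etabar i = 2 * KTh / (C1 * T%:R * Num.sqrt i%:R).
Hypothesis eta_def : forall t, eta t = 2 * Kc / (C2 * Num.sqrt t%:R).

Local Notation Thh j := (omac_theta f0 B Y1 Y2 Theta c w eta etabar KTh Kc Th1 ch1 T j).
Local Notation st i := (omac_env f0 B Y1 Y2 Theta (c i) (w i) eta Kc (Thh i.-1) (ch1 i)).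
Local Notation x i t := (st i t.-1).1.
Local Notation ch i t := (st i t.-1).2.
Local Notation y i t := (obs (c i) (w i t) (x i t)).
Local Notation G i := (\sum_(1 <= t < T.+1)
  grad_Th (Y1 (x i t)) (Y2 (x i t)) (Thh i.-1) (ch i t) (y i t)).

Lemma omac_theta_next j : Thh j.+1 = proj (ball_set KTh) (Thh j - etabar j.+1 *: G j.+1).
Proof.
rewrite [LHS]/=; congr (proj _ (_ - _ *: _)).
apply: eq_big_nat => t /andP[t1 _]; case: t t1 => [//|t _].
by rewrite /= cl_obs_next.
Qed.

Lemma omac_theta_ball j : ball_set KTh (Thh j).
Proof.
case: j => [|j]; first exact: Th1K.
by rewrite omac_theta_next; exact: (proj1 (proj_ballP _ KTh0)).
Qed.

(* The outer adapter runs online gradient descent on the per-environment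
   linear losses [Th |-> <G i, Th>], with gradient bound [C1 T]. *)
Theorem omac_ACE_le :
  ACE N T (omac_x f0 B Y1 Y2 Theta c w eta etabar KTh Kc Th1 ch1 T) <=
  gamma / (1 - rho) *
    Num.sqrt (W ^+ 2 + 3 * (KTh * C1 / Num.sqrt N%:R + Kc * C2 / Num.sqrt T%:R)).
Proof.
have env i : (1 <= i <= N)%N -> _ := fun Ni =>
  conj (omac_env_regret (cK Ni) (fun t => @wW i t Ni) (omac_theta_ball i.-1) (ch1K Ni) eta_def)
       (omac_env_grad_sum_le eta (cK Ni) (fun t => @wW i t Ni) (omac_theta_ball i.-1) (ch1K Ni)).
have outer : \sum_(1 <= i < N.+1) dot (G i) (Thh i.-1 - Theta) <=
             3 / 2 * (2 * KTh) * (C1 * T%:R) * Num.sqrt N%:R.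
  apply: (@ogd_regret_le _ _ (ball_set KTh) (fun i => Thh i.-1) (fun i => G i) etabar
           Theta _ _ N (@convex_ball _ _ KTh) ThetaK Th1K).
  - by case=> [//|j _]; rewrite omac_theta_next; exact: proj_ballP.
  - exact: ball_set_dist_le.
  - by move=> i Ni; case: (env i Ni).
  - by rewrite mulr_ge0.
  - by rewrite mulr_ge0 ?ler0n.
  - exact: etabar_def.
apply: (@ACE_le _ _ f0 beta gamma rho N T _
  (fun i t => resid (Y1 (x i t)) (Y2 (x i t)) (Thh i.-1) (ch i t) (y i t))) => //.
  by move=> i k Ni k1; have := omac_env_next (c i) (w i) eta (Thh i.-1) (ch1 i) k1.
have per_env : \sum_(1 <= i < N.+1)
      \sum_(1 <= t < T.+1) vnorm (resid (Y1 (x i t)) (Y2 (x i t)) (Thh i.-1) (ch i t) (y i t)) ^+ 2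
    <= \sum_(1 <= i < N.+1) (T%:R * W ^+ 2 + dot (G i) (Thh i.-1 - Theta)
                             + 3 / 2 * (2 * Kc) * C2 * Num.sqrt T%:R).
  by apply: ler_sum_nat => i; rewrite ltnS => /env [].
apply: le_trans per_env _.
have split_sqrt : N%:R * (T%:R * W ^+ 2 + 3 / 2 * (2 * Kc) * C2 * Num.sqrt T%:R)
    + 3 / 2 * (2 * KTh) * (C1 * T%:R) * Num.sqrt N%:R =
    (T * N)%:R * (W ^+ 2 + 3 * (KTh * C1 / Num.sqrt N%:R + Kc * C2 / Num.sqrt T%:R)).
  rewrite -{1}(@natr_div_sqrt R T) -{1}(@natr_div_sqrt R N) natrM.
  by field; rewrite !gt_eqF ?sqrtr_gt0 ?ltr0n.
by rewrite -split_sqrt; exact: ler_sum_const_add outer.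
Qed.

End OMAC.

Section Baseline.
Variables (a1 : nat -> 'cV[R]_(p + h)) (eta : nat -> R).
Hypothesis a1K : forall i, (1 <= i <= N)%N -> Kbar_set KTh Kc (a1 i).
Hypothesis eta_def : forall t, eta t =
  2 * Num.sqrt (KTh ^+ 2 + Kc ^+ 2) / (Num.sqrt (C1 ^+ 2 + C2 ^+ 2) * Num.sqrt t%:R).

Local Notation st i := (base_env f0 B Y1 Y2 Theta (c i) (w i) eta KTh Kc (a1 i)).
Local Notation x i t := (st i t.-1).1.
Local Notation Th i t := (usubmx (st i t.-1).2).
Local Notation ch i t := (dsubmx (st i t.-1).2).
Local Notation y i t := (obs (c i) (w i t) (x i t)).

Theorem baseline_ACE_le :
  ACE N T (base_x f0 B Y1 Y2 Theta c w eta KTh Kc a1) <=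
  gamma / (1 - rho) *
    Num.sqrt (W ^+ 2 + 3 * Num.sqrt (KTh ^+ 2 + Kc ^+ 2)
                       * Num.sqrt (C1 ^+ 2 + C2 ^+ 2) / Num.sqrt T%:R).
Proof.
apply: (@ACE_le _ _ f0 beta gamma rho N T _
  (fun i t => resid (Y1 (x i t)) (Y2 (x i t)) (Th i t) (ch i t) (y i t))) => //.
  by move=> i k Ni k1; have := base_env_next (c i) (w i) eta (a1 i) k1.
set K := 3 / 2 * (2 * Num.sqrt (KTh ^+ 2 + Kc ^+ 2)) * Num.sqrt (C1 ^+ 2 + C2 ^+ 2).
have per_env : \sum_(1 <= i < N.+1)
      \sum_(1 <= t < T.+1) vnorm (resid (Y1 (x i t)) (Y2 (x i t)) (Th i t) (ch i t) (y i t)) ^+ 2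
    <= \sum_(1 <= i < N.+1) (T%:R * W ^+ 2 + K * Num.sqrt T%:R).
  apply: ler_sum_nat => i; rewrite ltnS => Ni.
  exact: base_env_regret (cK Ni) (fun t => @wW i t Ni) (a1K Ni) eta_def.
apply: le_trans per_env _.
rewrite sumr_const_nat subSS subn0 -[_ *+ N]mulr_natl -{1}(@natr_div_sqrt R T) natrM.
rewrite le_eqVlt; apply/orP; left; apply/eqP.
by rewrite /K; field; rewrite gt_eqF ?sqrtr_gt0 ?ltr0n.
Qed.

End Baseline.

End Controllers.

End ClosedLoop.

Theorem corollary4 (R : realType) (n m p h N T : nat)
    (f0 : 'cV[R]_n -> 'cV[R]_n) (B : 'cV[R]_n -> 'M[R]_(n, m))
    (Y1 : 'cV[R]_n -> 'M[R]_(n, p)) (Y2 : 'cV[R]_n -> 'M[R]_(n, h))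
    (Theta : 'cV[R]_p) (c : nat -> 'cV[R]_h) (w : nat -> nat -> 'cV[R]_n)
    (beta gamma rho W K1 K2 KTh Kc : R)
    (Th1 : 'cV[R]_p) (ch1 : nat -> 'cV[R]_h) (a1 : nat -> 'cV[R]_(p + h)) :
  (0 < N)%N -> (0 < T)%N ->
  0 <= beta -> 0 <= gamma -> 0 <= rho -> rho < 1 ->
  eISS f0 beta gamma rho ->
  (forall x, \rank (B x) = n) ->
  (forall i t, (1 <= i <= N)%N -> (1 <= t <= T)%N -> vnorm (w i t) <= W) ->
  (forall x, spec_norm (Y1 x) <= K1) ->
  (forall x, spec_norm (Y2 x) <= K2) ->
  vnorm Theta <= KTh ->
  (forall i, (1 <= i <= N)%N -> vnorm (c i) <= Kc) ->
  let C1 := 4 * K1 ^+ 2 * KTh + 4 * K1 * K2 * Kc + 2 * K1 * W in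
  let C2 := 4 * K2 ^+ 2 * Kc + 4 * K1 * K2 * KTh + 2 * K2 * W in
  (* (a) OMAC *)
  (vnorm Th1 <= KTh ->
   (forall i, (1 <= i <= N)%N -> vnorm (ch1 i) <= Kc) ->
   let etabar := fun i : nat => 2 * KTh / (C1 * T%:R * Num.sqrt i%:R) in
   let eta := fun t : nat => 2 * Kc / (C2 * Num.sqrt t%:R) in
   ACE N T (omac_x f0 B Y1 Y2 Theta c w eta etabar KTh Kc Th1 ch1 T)
   <= gamma / (1 - rho) *
      Num.sqrt (W ^+ 2 + 3 * (KTh * C1 / Num.sqrt N%:R + Kc * C2 / Num.sqrt T%:R)))
  /\
  (* (b) baseline *)
  ((forall i, (1 <= i <= N)%N -> Kbar_set KTh Kc (a1 i)) ->
   let eta := fun t : nat =>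
     2 * Num.sqrt (KTh ^+ 2 + Kc ^+ 2) / (Num.sqrt (C1 ^+ 2 + C2 ^+ 2) * Num.sqrt t%:R) in
   ACE N T (base_x f0 B Y1 Y2 Theta c w eta KTh Kc a1)
   <= gamma / (1 - rho) *
      Num.sqrt (W ^+ 2 + 3 * Num.sqrt (KTh ^+ 2 + Kc ^+ 2)
                         * Num.sqrt (C1 ^+ 2 + C2 ^+ 2) / Num.sqrt T%:R)).
Proof.
move=> N0 T0 _ gamma0 rho0 rho1 iss B_full_rank wW Y1K Y2K ThetaK cK C1 C2.
have W0 : 0 <= W by apply: le_trans (vnorm_ge0 _) (wW 1 1 _ _); rewrite leqnn ?N0 ?T0.
split=> [Th1K ch1K | a1K]; cbv zeta.
- by apply: omac_ACE_le => //; exact: iss.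
- by apply: baseline_ACE_le => //; exact: iss.
Qed.
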